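(* Let $\phi(r)=r^{-12}-2r^{-6}$ (Lennard-Jones), $\eta=\phi'$, $\hat\eta(r)=\eta(r)+2\eta(2r)$, let $\tilde r_2$ be the unique point with $\eta''<0$ on $(0,\tilde r_2)$ and $\eta''>0$ on $(\tilde r_2,\infty)$, and let $a_1$ be the unique point with $\hat\eta'>0$ on $(0,a_1)$ and $\hat\eta'<0$ on $(a_1,\infty)$. Let $N,K$ be positive integers with $K<N-1$. For $\mathbf r=(r_{-N},\dots,r_N)\in(0,\infty)^{2N+1}$ define $F^{QCF}_j(\mathbf r)$, $j=-N,\dots,N+1$, by $F^{QCF}_{-N}(\mathbf r)=\eta(r_{-N})+2\eta(2r_{-N})$; $F^{QCF}_j(\mathbf r)=[\eta(r_j)+2\eta(2r_j)]-[\eta(r_{j-1})+2\eta(2r_{j-1})]$ for $-N+1\le j\le -K$ and for $K+1\le j\le N$; $F^{QCF}_j(\mathbf r)=[\eta(r_j)+\eta(r_j+r_{j+1})]-[\eta(r_{j-1})+\eta(r_{j-1}+r_{j-2})]$ for $-K+1\le j\le K$; $F^{QCF}_{N+1}(\mathbf r)=-[\eta(r_N)+2\eta(2r_N)]$. Let $f_{-N},\dots,f_{N+1}\in\mathbb R$ be anti-symmetric, i.e. $f_{j+1}=-f_{-j}$ for $j=0,\dots,N$, and set $\Phi_j=-\sum_{i=-N}^{j}f_i$ for $j=-N,\dots,N$. For any $r_U$ with $\tilde r_2/2<r_U<a_1$, let $r_L=\max\left(\frac{\tilde r_2}{2},\left(\frac{63}{16\,\eta'(r_U)}\right)^{1/8}\right)$.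 If $r_L<r_U$, then the equilibrium equations $F^{QCF}_j(\mathbf r)+f_j=0$, $j=-N,\dots,N+1$, have a unique symmetric solution $\mathbf r$ in $\Omega=(r_L,r_U)^{2N+1}$ whenever $\eta(r_L)+4\eta(2r_L)-2\eta(2r_U)<\Phi_j<\eta(r_U)+4\eta(2r_U)-2\eta(2r_L)$ for $j=-N,\dots,N$.
   Context: $F^{QCF}_j$ is the force-based quasicontinuum force on the $j$-th representative atom of a one-dimensional chain in terms of the lattice spacings $r_j$; $f_j$ are external forces. A vector $\mathbf r$ is symmetric if $r_{-j}=r_j$ for $j=1,\dots,N$. *)

From Stdlib Require Import Reals ZArith Lra.
From Coquelicot Require Import Coquelicot.
Open Scope R_scope.

Definition phi (r : R) : R := / r ^ 12 - 2 * / r ^ 6.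
Definition eta (r : R) : R := Derive phi r.
Definition eta1 (r : R) : R := Derive eta r.
Definition eta2 (r : R) : R := Derive eta1 r.
Definition eta_hat (r : R) : R := eta r + 2 * eta (2 * r).
Definition eta_hat1 (r : R) : R := Derive eta_hat r.

Definition is_tilde_r2 (t : R) : Prop :=
  0 < t /\ (forall r, 0 < r < t -> eta2 r < 0) /\ (forall r, t < r -> 0 < eta2 r).

Definition is_a1 (a : R) : Prop :=
  0 < a /\ (forall r, 0 < r < a -> 0 < eta_hat1 r) /\ (forall r, a < r -> eta_hat1 r < 0).

Definition F_QCF (N K : Z) (r : Z -> R) (j : Z) : R :=
  if (j =? -N)%Z then eta (r (-N)%Z) + 2 * eta (2 * r (-N)%Z)
  else if (j =? N + 1)%Z then - (eta (r N) + 2 * eta (2 * r N))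
  else if ((-K + 1 <=? j)%Z && (j <=? K)%Z)%bool then
    (eta (r j) + eta (r j + r (j + 1)%Z))
    - (eta (r (j - 1)%Z) + eta (r (j - 1)%Z + r (j - 2)%Z))
  else (eta (r j) + 2 * eta (2 * r j))
    - (eta (r (j - 1)%Z) + 2 * eta (2 * r (j - 1)%Z)).

Definition Phi (N : Z) (f : Z -> R) (j : Z) : R :=
  - sum_f_R0 (fun k => f (Z.of_nat k - N)%Z) (Z.to_nat (j + N)).

Definition r_L (t2 rU : R) : R :=
  Rmax (t2 / 2) (Rpower (63 / (16 * eta1 rU)) (1 / 8)).

Definition symmetric_vec (N : Z) (r : Z -> R) : Prop :=
  forall j, (1 <= j <= N)%Z -> r (- j)%Z = r j.

Definition in_Omega (N : Z) (rL rU : R) (r : Z -> R) : Prop :=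
  forall j, (-N <= j <= N)%Z -> rL < r j < rU.

Definition equilibrium (N K : Z) (f : Z -> R) (r : Z -> R) : Prop :=
  forall j, (-N <= j <= N + 1)%Z -> F_QCF N K r j + f j = 0.

(* Summing the equilibrium equations up to j shows that, for symmetric r, they are equivalent
   to prescribing the partial force sums (stresses) S_j(r) = Phi_j, with S_j = eta_hat(r_j) in
   the continuum region |j| >= K.  On [r_L, r_U] we have eta' >= eta'(r_U) =: d > 0, while on
   [2 r_L, oo) the second-neighbour derivative satisfies -c <= eta' <= 0 with c = 84/(2 r_L)^8,
   and the definition of r_L gives exactly 12 c <= d.  Hence eta_hat is increasing on [r_L, r_U]
   and each continuum spacing is eta_hat^-1(Phi_j), found by the intermediate value theorem.
   In the atomistic region the equations read eta(r_j) = G_j(r), where G_j only involves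
   second-neighbour terms and is therefore 6c-Lipschitz; as eta^-1 is 1/d-Lipschitz, the map
   r |-> eta^-1(G(r)) is a contraction of the box [r_L, r_U]^K and the Banach fixed point
   theorem yields existence and uniqueness.  The bounds on Phi_j are precisely what keeps
   Phi_j and G_j(r) in the ranges of eta_hat and eta over [r_L, r_U]. *)

From Stdlib Require Import Reals ZArith Lra Lia Classical IndefiniteDescription.
From Coquelicot Require Import Coquelicot.
From HB Require structures.
From mathcomp Require ssreflect ssrfun ssrbool eqtype choice ssrnat fintype order.
From mathcomp Require ssralg ssrnum interval matrix interval_inference.
From mathcomp Require boolp classical_sets functions reals topology normedtype sequences.
From mathcomp Require Rstruct.
Open Scope R_scope.

Lemma choice_on {A B : Type} (b : B) (P : A -> Prop) (Q : A -> B -> Prop) :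
  (forall x, P x -> exists y, Q x y) -> exists g : A -> B, forall x, P x -> Q x (g x).
Proof.
  intros H. apply functional_choice with (R := fun x y => P x -> Q x y). intros x.
  destruct (classic (P x)) as [Px | nPx].
  - destruct (H x Px) as [y Hy]. exists y. auto.
  - exists b. intros Px. contradiction.
Qed.

Lemma is_derive_continuity_pt (g : R -> R) (x l : R) : is_derive g x l -> continuity_pt g x.
Proof.
  intros Hg. apply continuity_pt_filterlim, (ex_derive_continuous (V := R_NormedModule)).
  exists l. exact Hg.
Qed.

Lemma ivt_open (g : R -> R) (a b z : R) :
  a < b -> (forall x, a <= x <= b -> continuity_pt g x) -> g a < z < g b ->
  exists y, a < y < b /\ g y = z.
Proof.
  intros Hab Hg Hz.
  destruct (Ranalysis5.IVT_interv (fun x => g x - z) a b) as [y [Hy Hy0]]; try lra.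
  - intros x Hx. apply (continuity_pt_minus g (fct_cte z)); [auto | apply continuity_pt_const].
    intros ? ?. reflexivity.
  - exists y. assert (y <> a) by (intros ->; lra). assert (y <> b) by (intros ->; lra). split; lra.
Qed.

Lemma mvt_interval (g g' : R -> R) (a b : R) :
  a <= b -> (forall z, a <= z <= b -> is_derive g z (g' z)) ->
  exists c, a <= c <= b /\ g b - g a = g' c * (b - a).
Proof.
  intros Hab Hg.
  destruct (MVT_gen g a b g') as [c Hc]; rewrite Rmin_left, Rmax_right in * by lra.
  - intros x Hx. apply Hg. lra.
  - intros x Hx. apply (is_derive_continuity_pt _ _ (g' x)), Hg, Hx.
  - exists c. exact Hc.
Qed.

Lemma dist_ge_of_increment_ge (g : R -> R) (a b k : R) :
  0 <= k -> (forall x y, a <= x <= y -> y <= b -> k * (y - x) <= g y - g x) ->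
  forall x y, a <= x <= b -> a <= y <= b -> k * Rabs (x - y) <= Rabs (g x - g y).
Proof.
  intros Hk Hg x y Hx Hy. destruct (Rle_or_lt x y) as [Hxy | Hxy].
  - specialize (Hg x y (conj (proj1 Hx) Hxy) (proj2 Hy)).
    rewrite Rabs_minus_sym, (Rabs_minus_sym (g x)), !Rabs_right by nra. exact Hg.
  - specialize (Hg y x (conj (proj1 Hy) (Rlt_le _ _ Hxy)) (proj2 Hx)).
    rewrite !Rabs_right by nra. exact Hg.
Qed.

Lemma inj_of_increment_ge (g : R -> R) (a b k : R) :
  0 < k -> (forall x y, a <= x <= y -> y <= b -> k * (y - x) <= g y - g x) ->
  forall x y, a <= x <= b -> a <= y <= b -> g x = g y -> x = y.
Proof.
  intros Hk Hg x y Hx Hy Hxy.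
  pose proof (dist_ge_of_increment_ge g a b k (Rlt_le _ _ Hk) Hg x y Hx Hy) as H.
  rewrite Hxy, Rminus_diag, Rabs_R0 in H.
  pose proof (Rabs_pos (x - y)). assert (Rabs (x - y) = 0) by nra.
  apply Rminus_diag_uniq, Rabs_eq_0. assumption.
Qed.

Definition inbox (n : nat) (a b : R) (x : nat -> R) : Prop :=
  forall k, (k < n)%nat -> a <= x k <= b.

Definition box_lipschitz (n : nat) (a b q : R) (T : (nat -> R) -> nat -> R) : Prop :=
  forall x y delta, inbox n a b x -> inbox n a b y ->
    (forall k, (k < n)%nat -> Rabs (x k - y k) <= delta) ->
    forall i, (i < n)%nat -> Rabs (T x i - T y i) <= q * delta.

Module BoxContraction.
Import HB.structures ssreflect ssrfun ssrbool ssrnat eqtype choice fintype order.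
Import ssralg ssrnum interval matrix.
Import interval_inference boolp classical_sets functions reals topology normedtype sequences.
Import Rstruct.
Import Order.TTheory GRing.Theory Num.Def Num.Theory numFieldNormedType.Exports.
Local Set Implicit Arguments.
Local Unset Strict Implicit.
Local Open Scope classical_set_scope.
Local Open Scope ring_scope.

(* Row vectors carry separate normed-module and complete-space instances; [banach_fixed_point]
   needs their join. *)
HB.instance Definition _ (R : realType) (n : nat) := Complete.on 'rV[R]_n.

Section rV_box.
Variables (R : realType) (n : nat) (a b q : R) (T : 'rV[R]_n -> 'rV[R]_n).
Definition rV_box : set 'rV[R]_n := [set x | forall i, a <= x ord0 i <= b].
Hypotheses (ab : a <= b) (q_ge0 : 0 <= q) (q_lt1 : q < 1)
  (T_box : forall x, rV_box x -> rV_box (T x))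
  (T_lip : forall x y, rV_box x -> rV_box y -> `|T x - T y| <= q * `|x - y|).

HB.instance Definition _ := isFun.Build _ _ rV_box rV_box T T_box.

Lemma closed_rV_box : closed rV_box.
Proof.
have -> : rV_box = \bigcap_i ((fun x : 'rV[R]_n => x ord0 i) @^-1` `[a, b]).
  apply/seteqP; split => x /= Hx i; rewrite ?in_itv; first by move=> _; exact: Hx.
  by have := Hx i I; rewrite /= in_itv.
apply: closed_bigI => i _; apply: preimage_closed; last exact: interval_closed.
by move=> x _; exact: coord_continuous.
Qed.

Lemma rV_box_unique_fixpoint :
  exists x, rV_box x /\ T x = x /\ forall y, rV_box y -> T y = y -> y = x.
Proof.
have ctrT : is_contraction T by exists (NngNum q_ge0); split => //= -[x y] [/= Bx By]; exact: T_lip.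
have [|x Bx xTx] := banach_fixed_point ctrT closed_rV_box.
  by exists (const_mx a) => i; rewrite mxE lexx ab.
exists x; split=> //; split=> [|y By yTy]; first by [].
exact: (contraction_fixpoint_unique ctrT).
Qed.
End rV_box.

Lemma mx_norm_coord_le (R : realType) m n (v : 'M[R]_(m, n)) i j : `|v i j| <= `|v|.
Proof. by rewrite [leRHS]/normr /= mx_normrE; apply/bigmax_geP; right; exists (i, j). Qed.

Lemma mx_norm_le (R : realType) m n (v : 'M[R]_(m, n)) d :
  0 <= d -> (forall i j, `|v i j| <= d) -> `|v| <= d.
Proof. by move=> d0 vd; rewrite /normr /= mx_normrE; apply/bigmax_leP; split => // -[i j]. Qed.

Local Unset Implicit Arguments.

Lemma box_unique_fixpoint (n : nat) (a b q : R) (T : (nat -> R) -> nat -> R) :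
  Rle a b -> Rle 0 q -> Rlt q 1 ->
  (forall x, inbox n a b x -> inbox n a b (T x)) -> box_lipschitz n a b q T ->
  exists x, inbox n a b x /\ (forall i, (i < n)%coq_nat -> T x i = x i) /\
    forall y, inbox n a b y -> (forall i, (i < n)%coq_nat -> T y i = y i) ->
    forall k, (k < n)%coq_nat -> y k = x k.
Proof.
move=> /RleP ab /RleP q_ge0 /RltP q_lt1 T_box T_lip.
pose seq_of_row (v : 'rV[R]_n) k := oapp (v ord0) 0 (insub k).
have seq_of_rowE (v : 'rV[R]_n) (i : 'I_n) : seq_of_row v i = v ord0 i by rewrite /seq_of_row valK.
pose row_of_seq (x : nat -> R) : 'rV[R]_n := \row_i x i.
have seq_of_row_box v : rV_box a b v -> inbox n a b (seq_of_row v).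
  move=> Bv k /ssrnat.ltP kn; have := Bv (Ordinal kn).
  rewrite -[k]/(val (Ordinal kn)) seq_of_rowE => /andP[].
  by move=> /RleP ? /RleP.
have row_of_seq_box x : inbox n a b x -> rV_box a b (row_of_seq x).
  by move=> Bx i; rewrite mxE; have [/RleP -> /RleP ->] := Bx i (ssrnat.ltP (ltn_ord i)).
pose T_row v := row_of_seq (T (seq_of_row v)).
have T_row_box v : rV_box a b v -> rV_box a b (T_row v) by move/seq_of_row_box/T_box/row_of_seq_box.
have T_row_lip v w : rV_box a b v -> rV_box a b w -> `|T_row v - T_row w| <= q * `|v - w|.
  move=> Bv Bw; apply: mx_norm_le => [|i j]; first by rewrite mulr_ge0.
  rewrite ord1 !mxE; apply/RleP/T_lip; [exact: seq_of_row_box | exact: seq_of_row_box | |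
    exact/ssrnat.ltP].
  move=> k /ssrnat.ltP kn; rewrite -[k]/(val (Ordinal kn)) !seq_of_rowE.
  by apply/RleP; have := mx_norm_coord_le (v - w) ord0 (Ordinal kn); rewrite !mxE.
have [v [Bv [Tv v_uniq]]] := rV_box_unique_fixpoint ab q_ge0 q_lt1 T_row_box T_row_lip.
exists (seq_of_row v); split; first exact: seq_of_row_box.
split=> [i /ssrnat.ltP ilt|y By Ty k /ssrnat.ltP kn].
  by rewrite -[i]/(val (Ordinal ilt)) seq_of_rowE -{2}Tv mxE.
have yseq_of_row (i : 'I_n) : seq_of_row (row_of_seq y) i = y i by rewrite seq_of_rowE mxE.
(* [T] only reads the first [n] coordinates: the Lipschitz bound with [delta = 0]. *)
have Ty' : T_row (row_of_seq y) = row_of_seq y.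
  apply/rowP => i; rewrite !mxE -(Ty i (ssrnat.ltP (ltn_ord i))).
  apply/eqP; rewrite -subr_eq0 -normr_le0 -(mulr0 q); apply/RleP.
  apply: T_lip => [||k' /ssrnat.ltP k'n|];
    [exact/seq_of_row_box/row_of_seq_box | exact: By | | exact/ssrnat.ltP].
  rewrite -[k']/(val (Ordinal k'n)) yseq_of_row Rminus_diag Rabs_R0; exact: Rle_refl.
by rewrite -[k]/(val (Ordinal kn)) -yseq_of_row (v_uniq _ (row_of_seq_box _ By) Ty').
Qed.
End BoxContraction.

Definition eta_cf (r : R) : R := 12 / r ^ 7 - 12 / r ^ 13.
Definition eta1_cf (r : R) : R := 156 / r ^ 14 - 84 / r ^ 8.
Definition eta2_cf (r : R) : R := 672 / r ^ 9 - 2184 / r ^ 15.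

Ltac auto_derive_rational :=
  auto_derive; [repeat split; apply Rgt_not_eq; repeat apply Rmult_lt_0_compat; lra | field; lra].

Lemma is_derive_pos_ext (g h : R -> R) (x l : R) :
  (forall y, 0 < y -> g y = h y) -> 0 < x -> is_derive h x l -> is_derive g x l.
Proof.
  intros gh Hx Hh. apply (is_derive_ext_loc h); [| exact Hh].
  apply (filter_imp (fun y => 0 < y)); [intros y Hy; symmetry; auto |].
  exact (open_gt 0 x Hx).
Qed.

Lemma is_derive_phi x : 0 < x -> is_derive phi x (eta_cf x).
Proof.
  intros Hx. unfold phi, eta_cf. auto_derive_rational.
Qed.

Lemma etaE x : 0 < x -> eta x = eta_cf x.
Proof. intros Hx. exact (is_derive_unique _ _ _ (is_derive_phi x Hx)). Qed.

Lemma is_derive_eta x : 0 < x -> is_derive eta x (eta1_cf x).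
Proof.
  intros Hx. apply (is_derive_pos_ext _ eta_cf); auto using etaE.
  unfold eta_cf, eta1_cf. auto_derive_rational.
Qed.

Lemma eta1E x : 0 < x -> eta1 x = eta1_cf x.
Proof. intros Hx. exact (is_derive_unique _ _ _ (is_derive_eta x Hx)). Qed.

Lemma is_derive_eta1 x : 0 < x -> is_derive eta1 x (eta2_cf x).
Proof.
  intros Hx. apply (is_derive_pos_ext _ eta1_cf); auto using eta1E.
  unfold eta1_cf, eta2_cf. auto_derive_rational.
Qed.

Lemma eta2E x : 0 < x -> eta2 x = eta2_cf x.
Proof. intros Hx. exact (is_derive_unique _ _ _ (is_derive_eta1 x Hx)). Qed.

Lemma is_derive_eta_hat x : 0 < x -> is_derive eta_hat x (eta1_cf x + 4 * eta1_cf (2 * x)).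
Proof.
  intros Hx. apply (is_derive_pos_ext _ (fun y => eta_cf y + 2 * eta_cf (2 * y))); auto.
  - intros y Hy. unfold eta_hat. rewrite !etaE by lra. reflexivity.
  - unfold eta_cf, eta1_cf. auto_derive_rational.
Qed.

Lemma eta_hat1E x : 0 < x -> eta_hat1 x = eta1_cf x + 4 * eta1_cf (2 * x).
Proof. intros Hx. exact (is_derive_unique _ _ _ (is_derive_eta_hat x Hx)). Qed.

Lemma eta1_cf_form r : 0 < r -> eta1_cf r = (156 - 84 * r ^ 6) / r ^ 14.
Proof. intros Hr. unfold eta1_cf. field. lra. Qed.

Lemma eta2_cf_form r : 0 < r -> eta2_cf r = (672 * r ^ 6 - 2184) / r ^ 15.
Proof. intros Hr. unfold eta2_cf. field. lra. Qed.

(* In fact [t2 ^ 6 = 13 / 4] and [a1 ^ 6 = (156 + 624 / 16384) / (84 + 336 / 256)]; these rational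
   bounds are all that is used. *)
Lemma tilde_r2_ge t2 : is_tilde_r2 t2 -> 6 / 5 <= t2.
Proof.
  intros [Ht2 [_ Hpos]]. apply Rnot_lt_le. intros Hlt.
  specialize (Hpos (6 / 5) Hlt). rewrite eta2E, eta2_cf_form in Hpos by lra.
  assert (0 < (6 / 5) ^ 15) by (apply pow_lt; lra).
  assert (Hneg : (672 * (6 / 5) ^ 6 - 2184) / (6 / 5) ^ 15 < 0).
  { apply Rdiv_neg_pos; [simpl; lra | assumption]. }
  lra.
Qed.

Lemma lt_a1_pow6 a1 r : is_a1 a1 -> 0 < r < a1 -> r ^ 6 < 183 / 100.
Proof.
  intros [_ [Hpos _]] Hr. specialize (Hpos r Hr).
  rewrite eta_hat1E, !eta1_cf_form in Hpos by lra.
  assert (Hr14 : 0 < r ^ 14) by (apply pow_lt; lra).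
  replace ((156 - 84 * r ^ 6) / r ^ 14 + 4 * ((156 - 84 * (2 * r) ^ 6) / (2 * r) ^ 14))
    with ((156 + 624 / 16384 - (84 + 336 / 256) * r ^ 6) / r ^ 14) in Hpos by (field; lra).
  assert (0 < 156 + 624 / 16384 - (84 + 336 / 256) * r ^ 6); [| lra].
  apply (Rmult_lt_reg_r (/ r ^ 14)); [apply Rinv_0_lt_compat; lra | lra].
Qed.

Lemma eta1_cf_antitone z w : 0 < z <= w -> w ^ 6 < 13 / 4 -> eta1_cf w <= eta1_cf z.
Proof.
  intros Hz Hw. destruct (mvt_interval eta1_cf eta2_cf z w) as [c [Hc Heq]]; try lra.
  { intros y Hy. unfold eta1_cf, eta2_cf. auto_derive_rational. }
  assert (eta2_cf c <= 0); [| nra].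
  rewrite eta2_cf_form by lra.
  assert (c ^ 6 <= w ^ 6) by (apply pow_incr; lra).
  apply Rlt_le, Rdiv_neg_pos; [| apply pow_lt]; lra.
Qed.

Definition eta_lip (s0 : R) : R := 84 / s0 ^ 8.

Lemma eta_increment_far s0 s t :
  6 / 5 <= s0 <= s -> s <= t -> - eta_lip s0 * (t - s) <= eta t - eta s <= 0.
Proof.
  intros Hs Hst. destruct (mvt_interval eta eta1_cf s t) as [c [Hc ->]]; try lra.
  { intros z Hz. apply is_derive_eta. lra. }
  assert (- eta_lip s0 <= eta1_cf c <= 0); [| split; nra].
  assert (Hc8 : s0 ^ 8 <= c ^ 8) by (apply pow_incr; lra).
  assert (0 < s0 ^ 8) by (apply pow_lt; lra).
  assert (0 < c ^ 14) by (apply pow_lt; lra).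
  split.
  - unfold eta_lip, eta1_cf, Rdiv.
    assert (/ c ^ 8 <= / s0 ^ 8) by (apply Rinv_le_contravar; lra).
    assert (0 < / c ^ 14) by (apply Rinv_0_lt_compat; lra). lra.
  - rewrite eta1_cf_form by lra.
    assert ((6 / 5) ^ 6 <= c ^ 6) by (apply pow_incr; lra).
    apply Rlt_le, Rdiv_neg_pos; [simpl in *; lra | assumption].
Qed.

Section eta_on_box.
Variables L U : R.
Hypotheses (L_ge : 3 / 5 <= L) (L_le_U : L <= U) (U_pow6 : U ^ 6 < 183 / 100).

Lemma eta1_pos : 0 < eta1 U.
Proof.
  rewrite eta1E, eta1_cf_form by lra.
  apply Rdiv_lt_0_compat; [lra | apply pow_lt; lra].
Qed.

Lemma eta_increment_box x y : L <= x <= y -> y <= U -> eta1 U * (y - x) <= eta y - eta x.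
Proof.
  intros Hxy Hy. destruct (mvt_interval eta eta1_cf x y) as [c [Hc ->]]; try lra.
  { intros z Hz. apply is_derive_eta. lra. }
  assert (eta1 U <= eta1_cf c); [| nra].
  rewrite eta1E by lra. apply eta1_cf_antitone; lra.
Qed.

Lemma eta_far_range s : 2 * L <= s <= 2 * U -> eta (2 * U) <= eta s <= eta (2 * L).
Proof.
  intros Hs.
  pose proof (eta_increment_far (2 * L) (2 * L) s ltac:(lra) ltac:(lra)).
  pose proof (eta_increment_far (2 * L) s (2 * U) ltac:(lra) ltac:(lra)).
  lra.
Qed.

Lemma eta_far_lipschitz s t :
  2 * L <= s -> 2 * L <= t -> Rabs (eta s - eta t) <= eta_lip (2 * L) * Rabs (s - t).
Proof.
  intros Hs Ht. destruct (Rle_or_lt s t) as [Hst | Hst].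
  - pose proof (eta_increment_far (2 * L) s t ltac:(lra) Hst).
    rewrite Rabs_minus_sym, (Rabs_minus_sym s), Rabs_left1, Rabs_right by lra. lra.
  - pose proof (eta_increment_far (2 * L) t s ltac:(lra) ltac:(lra)).
    rewrite Rabs_left1, Rabs_right by lra. lra.
Qed.

Lemma eta_hat_increment x y :
  L <= x <= y -> y <= U -> (eta1 U - 4 * eta_lip (2 * L)) * (y - x) <= eta_hat y - eta_hat x.
Proof.
  intros Hxy Hy. unfold eta_hat.
  pose proof (eta_increment_box x y Hxy Hy).
  pose proof (eta_increment_far (2 * L) (2 * x) (2 * y) ltac:(lra) ltac:(lra)).
  lra.
Qed.

End eta_on_box.

(* This is where the constants [63 / 16] and [1 / 8] in [r_L] come from. *)
Lemma eta_lip_le_of_r_L (d L : R) :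
  0 < d -> 0 < L -> Rpower (63 / (16 * d)) (1 / 8) <= L -> 12 * eta_lip (2 * L) <= d.
Proof.
  intros Hd HL HpL. set (X := 63 / (16 * d)) in HpL.
  assert (HX : 0 < X) by (apply Rdiv_lt_0_compat; lra).
  assert (Hp : 0 < Rpower X (1 / 8)) by apply exp_pos.
  assert (HX8 : X <= L ^ 8).
  { replace X with (Rpower X (1 / 8) ^ 8).
    - apply pow_incr. lra.
    - rewrite <- Rpower_pow, Rpower_mult by assumption.
      replace (1 / 8 * INR 8) with 1 by (simpl; field). apply Rpower_1, HX. }
  assert (HdX : 16 * d * X = 63) by (unfold X; field; lra).
  unfold eta_lip. rewrite Rpow_mult_distr.
  assert (0 < 2 ^ 8 * L ^ 8) by (apply Rmult_lt_0_compat; apply pow_lt; lra).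
  apply (Rmult_le_reg_r (2 ^ 8 * L ^ 8)); [assumption |].
  replace (12 * (84 / (2 ^ 8 * L ^ 8)) * (2 ^ 8 * L ^ 8)) with 1008 by (field; lra).
  simpl pow at 1. nra.
Qed.

Definition atomistic_stress (r : Z -> R) (j : Z) : R :=
  eta (r j) + eta (r j + r (j + 1)%Z) + eta (r (j - 1)%Z + r j).

(* For symmetric [r], the partial sum of the forces [F_QCF N K r i] over [i <= j]. *)
Definition qcf_stress (K : Z) (r : Z -> R) (j : Z) : R :=
  if orb (j <=? - K)%Z (K <=? j)%Z then eta_hat (r j)
  else atomistic_stress r j - atomistic_stress r (- K)%Z + eta_hat (r (- K)%Z).

Definition antisymmetric_forces (N : Z) (f : Z -> R) : Prop :=
  forall j, (0 <= j <= N)%Z -> f (j + 1)%Z = - f (- j)%Z.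

Lemma F_QCF_first N K r : (0 < K < N)%Z -> F_QCF N K r (- N)%Z = qcf_stress K r (- N)%Z.
Proof.
  intros H. unfold F_QCF, qcf_stress. rewrite Z.eqb_refl.
  destruct (Z.leb_spec (- N) (- K)); [reflexivity | lia].
Qed.

Lemma F_QCF_last N K r : (0 < K < N)%Z -> F_QCF N K r (N + 1)%Z = - qcf_stress K r N.
Proof.
  intros H. unfold F_QCF, qcf_stress. destruct (Z.eqb_spec (N + 1) (- N)); [lia |].
  rewrite Z.eqb_refl. destruct (Z.leb_spec K N); [| lia].
  rewrite Bool.orb_true_r. reflexivity.
Qed.

Lemma F_QCF_stress_diff N K r j :
  (0 < K)%Z -> (K < N - 1)%Z -> (- N < j <= N)%Z -> symmetric_vec N r ->
  F_QCF N K r j = qcf_stress K r j - qcf_stress K r (j - 1)%Z.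
Proof.
  intros HK HKN Hj Hr.
  assert (S0 : r K = r (- K)%Z) by (symmetry; apply Hr; lia).
  assert (S1 : r (K + 1)%Z = r (- K - 1)%Z).
  { replace (- K - 1)%Z with (- (K + 1))%Z by lia. symmetry; apply Hr; lia. }
  assert (S2 : r (K - 1)%Z = r (- K + 1)%Z).
  { replace (- K + 1)%Z with (- (K - 1))%Z by lia.
    destruct (Z.eq_dec K 1) as [-> | HK1]; [reflexivity | symmetry; apply Hr; lia]. }
  unfold F_QCF, qcf_stress, atomistic_stress, eta_hat.
  destruct (Z.eqb_spec j (- N)); [lia |]. destruct (Z.eqb_spec j (N + 1)); [lia |].
  replace (j - 1 + 1)%Z with j by lia. replace (j - 1 - 1)%Z with (j - 2)%Z by lia.
  destruct (Z.leb_spec (- K + 1) j); destruct (Z.leb_spec j K); simpl;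
  destruct (Z.leb_spec j (- K)); destruct (Z.leb_spec K j); simpl;
  destruct (Z.leb_spec (j - 1) (- K)); destruct (Z.leb_spec K (j - 1)); simpl; try lia;
  try reflexivity.
  (* the interfaces [j = K], where the symmetry of [r] is used, and [j = - K + 1] *)
  - assert (j = K) by lia. subst j.
    rewrite <- S0, <- S1, <- S2, (Rplus_comm (r (K + 1)%Z)), (Rplus_comm (r K) (r (K - 1)%Z)),
      (Rplus_comm (r (K - 2)%Z)). ring.
  - assert (K = 1 - j)%Z by lia. subst K.
    replace (- (1 - j) + 1)%Z with j by lia. replace (- (1 - j) - 1)%Z with (j - 2)%Z by lia.
    replace (- (1 - j))%Z with (j - 1)%Z by lia.
    rewrite (Rplus_comm (r (j - 2)%Z)). ring.
  - rewrite (Rplus_comm (r (j - 2)%Z)). ring.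
Qed.

Lemma Phi_first N f : Phi N f (- N)%Z = - f (- N)%Z.
Proof. unfold Phi. replace (- N + N)%Z with 0%Z by lia. reflexivity. Qed.

Lemma Phi_succ N f j : (- N < j)%Z -> Phi N f j = Phi N f (j - 1)%Z - f j.
Proof.
  intros H. unfold Phi. replace (Z.to_nat (j + N)) with (S (Z.to_nat (j - 1 + N))) by lia.
  rewrite tech5. replace (Z.of_nat (S (Z.to_nat (j - 1 + N))) - N)%Z with j by lia. ring.
Qed.

Lemma Phi_opp N f j : antisymmetric_forces N f -> (- N <= j <= N)%Z -> Phi N f (- j)%Z = Phi N f j.
Proof.
  intros Hf Hj.
  assert (Hnat : forall m, (m <= Z.to_nat N)%nat ->
    Phi N f (- Z.of_nat m)%Z = Phi N f (Z.of_nat m)).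
  { induction m as [| m IH]; intros Hm; [reflexivity |].
    specialize (IH ltac:(lia)).
    rewrite (Phi_succ N f (Z.of_nat (S m))) by lia.
    rewrite (Phi_succ N f (- Z.of_nat m)%Z) in IH by lia.
    replace (- Z.of_nat m - 1)%Z with (- Z.of_nat (S m))%Z in IH by lia.
    replace (Z.of_nat (S m) - 1)%Z with (Z.of_nat m) by lia.
    replace (Z.of_nat (S m)) with (Z.of_nat m + 1)%Z at 2 by lia.
    rewrite Hf by lia. lra. }
  destruct (Z_le_gt_dec 0 j).
  - replace j with (Z.of_nat (Z.to_nat j)) by lia. apply Hnat. lia.
  - replace j with (- Z.of_nat (Z.to_nat (- j)))%Z by lia.
    rewrite Z.opp_involutive. symmetry. apply Hnat. lia.
Qed.

Lemma equilibrium_iff_stress N K f r :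
  (0 < K)%Z -> (K < N - 1)%Z -> antisymmetric_forces N f -> symmetric_vec N r ->
  equilibrium N K f r <-> forall j, (- N <= j <= N)%Z -> qcf_stress K r j = Phi N f j.
Proof.
  intros HK HKN Hf Hr. split.
  - intros He j Hj.
    assert (Hm : (Z.to_nat (j + N) <= Z.to_nat (2 * N))%nat) by lia.
    replace j with (- N + Z.of_nat (Z.to_nat (j + N)))%Z by lia. clear Hj.
    induction (Z.to_nat (j + N)) as [| m IH].
    + replace (- N + Z.of_nat 0)%Z with (- N)%Z by lia.
      rewrite <- F_QCF_first, Phi_first by lia. specialize (He (- N)%Z ltac:(lia)). lra.
    + specialize (IH ltac:(lia)). set (i := (- N + Z.of_nat (S m))%Z).
      specialize (He i ltac:(lia)). rewrite F_QCF_stress_diff in He by (auto; lia).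
      rewrite (Phi_succ N f i) by lia.
      replace (i - 1)%Z with (- N + Z.of_nat m)%Z in * by lia. lra.
  - intros HS j Hj.
    destruct (Z.eq_dec j (- N)) as [-> | Hj1]; [| destruct (Z.eq_dec j (N + 1)) as [-> | Hj2]].
    + rewrite F_QCF_first, HS, Phi_first by lia. ring.
    + rewrite F_QCF_last, HS, <- (Phi_opp N f N), Phi_first, (Hf N) by (auto; lia). ring.
    + rewrite F_QCF_stress_diff, !HS, (Phi_succ N f j) by (auto; lia). ring.
Qed.

Definition inner_rhs (N K : Z) (f r : Z -> R) (j : Z) : R :=
  Phi N f j - eta_hat (r (- K)%Z) + atomistic_stress r (- K)%Z
  - eta (r j + r (j + 1)%Z) - eta (r (j - 1)%Z + r j).

Lemma stress_inner_iff N K f r j :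
  (- K < j < K)%Z -> qcf_stress K r j = Phi N f j <-> eta (r j) = inner_rhs N K f r j.
Proof.
  intros Hj. unfold qcf_stress, inner_rhs, atomistic_stress at 1.
  destruct (Z.leb_spec j (- K)); [lia |]. destruct (Z.leb_spec K j); [lia |].
  simpl. split; intros; lra.
Qed.

Lemma symmetric_vec_opp N r j : symmetric_vec N r -> (- N <= j <= N)%Z -> r (- j)%Z = r j.
Proof.
  intros Hr Hj. destruct (Z_lt_le_dec 0 j); [apply Hr; lia |].
  destruct (Z.eq_dec j 0) as [-> | Hj0]; [reflexivity |].
  rewrite <- (Z.opp_involutive j) at 2. symmetry. apply Hr. lia.
Qed.

Lemma inner_rhs_opp N K f r j :
  (K < N - 1)%Z -> antisymmetric_forces N f -> symmetric_vec N r -> (- K < j < K)%Z ->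
  inner_rhs N K f r (- j)%Z = inner_rhs N K f r j.
Proof.
  intros HKN Hf Hr Hj. unfold inner_rhs. rewrite Phi_opp by (auto; lia).
  replace (- j + 1)%Z with (- (j - 1))%Z by lia. replace (- j - 1)%Z with (- (j + 1))%Z by lia.
  rewrite !(symmetric_vec_opp N r) by (auto; lia).
  rewrite (Rplus_comm (r j) (r (j - 1)%Z)), (Rplus_comm (r (j + 1)%Z) (r j)). ring.
Qed.

Lemma inner_rhs_ext N K f r r' j :
  (K < N - 1)%Z -> (forall m, (- N <= m <= N)%Z -> r m = r' m) -> (- K < j < K)%Z ->
  inner_rhs N K f r j = inner_rhs N K f r' j.
Proof.
  intros HKN Hrr' Hj. unfold inner_rhs, atomistic_stress, eta_hat.
  rewrite !Hrr' by lia. reflexivity.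
Qed.

Lemma Rabs_sub3_le a b c A B C :
  Rabs a <= A -> Rabs b <= B -> Rabs c <= C -> Rabs (a - b - c) <= A + B + C.
Proof. unfold Rabs. repeat destruct Rcase_abs; lra. Qed.

Definition in_box (N : Z) (a b : R) (r : Z -> R) : Prop :=
  forall j, (- N <= j <= N)%Z -> a <= r j <= b.

(* [x k] is the spacing [r_(+-k)] for [k < K]; the continuum spacings [r_(+-j)], [K <= j], are
   [rho (- j)]. *)
Definition symmetric_glue (K : Z) (rho : Z -> R) (x : nat -> R) (j : Z) : R :=
  if (Z.abs j <? K)%Z then x (Z.to_nat (Z.abs j)) else rho (- Z.abs j)%Z.

Definition inner_map (N K : Z) (f rho : Z -> R) (einv : R -> R) (x : nat -> R) (i : nat) : R :=
  einv (inner_rhs N K f (symmetric_glue K rho x) (Z.of_nat i)).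

Lemma symmetric_glue_symmetric N K rho x : symmetric_vec N (symmetric_glue K rho x).
Proof. intros j _. unfold symmetric_glue. rewrite Z.abs_opp. reflexivity. Qed.

Lemma symmetric_glue_ext K rho x y j :
  (forall k, (k < Z.to_nat K)%nat -> x k = y k) ->
  symmetric_glue K rho x j = symmetric_glue K rho y j.
Proof.
  intros Hxy. unfold symmetric_glue.
  destruct (Z.ltb_spec (Z.abs j) K); [apply Hxy; lia | reflexivity].
Qed.

Section qcf_solution.
Variables (t2 a1 : R) (N K : Z) (f : Z -> R) (rU : R).
Hypotheses (Ht2 : is_tilde_r2 t2) (Ha1 : is_a1 a1) (HK : (0 < K)%Z) (HKN : (K < N - 1)%Z)
  (Hf : antisymmetric_forces N f) (HrU : t2 / 2 < rU < a1) (HLU : r_L t2 rU < rU)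
  (HPhi : forall j, (- N <= j <= N)%Z ->
     eta (r_L t2 rU) + 4 * eta (2 * r_L t2 rU) - 2 * eta (2 * rU) < Phi N f j
     < eta rU + 4 * eta (2 * rU) - 2 * eta (2 * r_L t2 rU)).

Local Notation L := (r_L t2 rU).
Local Notation c := (eta_lip (2 * L)).
Local Notation d := (eta1 rU).

Lemma r_L_ge : 3 / 5 <= L.
Proof.
  pose proof (tilde_r2_ge t2 Ht2). pose proof (Rmax_l (t2 / 2) (Rpower (63 / (16 * d)) (1 / 8))).
  unfold r_L. lra.
Qed.

Lemma rU_pow6 : rU ^ 6 < 183 / 100.
Proof. pose proof r_L_ge. apply (lt_a1_pow6 a1); [assumption | lra]. Qed.

Lemma d_pos : 0 < d.
Proof. apply (eta1_pos L); [apply r_L_ge | lra | apply rU_pow6]. Qed.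

Lemma c_pos : 0 < c.
Proof. pose proof r_L_ge. apply Rdiv_lt_0_compat; [lra | apply pow_lt; lra]. Qed.

Lemma twelve_c_le_d : 12 * c <= d.
Proof.
  pose proof r_L_ge. apply eta_lip_le_of_r_L; [apply d_pos | lra | apply Rmax_r].
Qed.

Lemma contraction_factor : 0 <= 6 * c / d < 1.
Proof.
  pose proof twelve_c_le_d. pose proof c_pos. pose proof d_pos. split.
  - apply Rlt_le, Rdiv_lt_0_compat; lra.
  - apply (Rmult_lt_reg_r d); [lra |]. unfold Rdiv. rewrite Rmult_assoc, Rinv_l; lra.
Qed.

Lemma eta_hat_inj_box x y : L <= x <= rU -> L <= y <= rU -> eta_hat x = eta_hat y -> x = y.
Proof.
  pose proof twelve_c_le_d. pose proof c_pos.
  apply (inj_of_increment_ge eta_hat L rU (d - 4 * c)); [lra |].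
  intros; apply eta_hat_increment; auto using r_L_ge, rU_pow6; lra.
Qed.

Lemma eta_expanding_box x y :
  L <= x <= rU -> L <= y <= rU -> d * Rabs (x - y) <= Rabs (eta x - eta y).
Proof.
  apply (dist_ge_of_increment_ge eta L rU d); [apply Rlt_le, d_pos |].
  intros; apply (eta_increment_box L); auto using r_L_ge, rU_pow6; lra.
Qed.

Lemma eta_inj_box x y : L <= x <= rU -> L <= y <= rU -> eta x = eta y -> x = y.
Proof.
  apply (inj_of_increment_ge eta L rU d); [apply d_pos |].
  intros; apply (eta_increment_box L); auto using r_L_ge, rU_pow6; lra.
Qed.

Lemma outer_solution :
  exists rho : Z -> R, forall j, (- N <= j <= - K)%Z ->
    L < rho j < rU /\ eta_hat (rho j) = Phi N f j.
Proof.
  apply (choice_on 0 (fun j => (- N <= j <= - K)%Z)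
    (fun j y => L < y < rU /\ eta_hat y = Phi N f j)).
  intros j Hj. pose proof r_L_ge.
  pose proof (eta_far_range L rU ltac:(lra) (2 * L) ltac:(lra)).
  specialize (HPhi j ltac:(lia)).
  destruct (ivt_open eta_hat L rU (Phi N f j)) as [y Hy]; [lra | | unfold eta_hat; lra |].
  - intros x Hx. apply (is_derive_continuity_pt _ _ _ (is_derive_eta_hat x ltac:(lra))).
  - exists y. exact Hy.
Qed.

Lemma eta_inverse :
  exists einv : R -> R, forall z, eta L < z < eta rU -> L < einv z < rU /\ eta (einv z) = z.
Proof.
  apply (choice_on 0 (fun z => eta L < z < eta rU) (fun z y => L < y < rU /\ eta y = z)).
  intros z Hz. pose proof r_L_ge.
  apply (ivt_open eta L rU z); [lra | | exact Hz].
  intros x Hx. apply (is_derive_continuity_pt _ _ _ (is_derive_eta x ltac:(lra))).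
Qed.

Lemma inner_rhs_range r j :
  in_box N L rU r -> (- K < j < K)%Z -> eta L < inner_rhs N K f r j < eta rU.
Proof.
  intros Hr Hj. pose proof r_L_ge.
  assert (Hfar : forall s t, L <= s <= rU -> L <= t <= rU ->
    eta (2 * rU) <= eta (s + t) <= eta (2 * L)).
  { intros s t Hs Ht. apply (eta_far_range L rU); lra. }
  unfold inner_rhs, atomistic_stress, eta_hat.
  pose proof (Hfar _ _ (Hr (- K)%Z ltac:(lia)) (Hr (- K)%Z ltac:(lia))).
  pose proof (Hfar _ _ (Hr (- K)%Z ltac:(lia)) (Hr (- K + 1)%Z ltac:(lia))).
  pose proof (Hfar _ _ (Hr (- K - 1)%Z ltac:(lia)) (Hr (- K)%Z ltac:(lia))).
  pose proof (Hfar _ _ (Hr j ltac:(lia)) (Hr (j + 1)%Z ltac:(lia))).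
  pose proof (Hfar _ _ (Hr (j - 1)%Z ltac:(lia)) (Hr j ltac:(lia))).
  replace (- K + 1)%Z with (- K + 1)%Z in * by lia.
  replace (2 * r (- K)%Z) with (r (- K)%Z + r (- K)%Z) by ring.
  specialize (HPhi j ltac:(lia)). lra.
Qed.

Lemma eta_sum_lipschitz s t s' t' delta :
  L <= s -> L <= t -> L <= s' -> L <= t' -> Rabs (s - s') <= delta -> Rabs (t - t') <= delta ->
  Rabs (eta (s + t) - eta (s' + t')) <= 2 * c * delta.
Proof.
  intros Hs Ht Hs' Ht' Hss' Htt'. pose proof c_pos. pose proof r_L_ge.
  eapply Rle_trans; [apply (eta_far_lipschitz L); lra |].
  replace (s + t - (s' + t')) with ((s - s') + (t - t')) by ring.
  pose proof (Rabs_triang (s - s') (t - t')). nra.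
Qed.

Lemma inner_rhs_lipschitz r r' delta j :
  in_box N L rU r -> in_box N L rU r' ->
  r (- K)%Z = r' (- K)%Z -> r (- K - 1)%Z = r' (- K - 1)%Z ->
  (forall m, (- N <= m <= N)%Z -> Rabs (r m - r' m) <= delta) -> (- K < j < K)%Z ->
  Rabs (inner_rhs N K f r j - inner_rhs N K f r' j) <= 6 * c * delta.
Proof.
  intros Hr Hr' HK0 HK1 Hd Hj.
  assert (Hd0 : 0 <= delta) by (eapply Rle_trans; [apply Rabs_pos | apply (Hd 0%Z); lia]).
  assert (Hsum : forall m m', (- N <= m <= N)%Z -> (- N <= m' <= N)%Z ->
    Rabs (eta (r m + r m') - eta (r' m + r' m')) <= 2 * c * delta).
  { intros m m' Hm Hm'. apply eta_sum_lipschitz; auto;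
      [apply Hr | apply Hr | apply Hr' | apply Hr']; auto. }
  unfold inner_rhs, atomistic_stress, eta_hat. rewrite <- HK0, <- HK1.
  pose proof (Hsum (- K)%Z (- K + 1)%Z ltac:(lia) ltac:(lia)) as D1. rewrite <- HK0 in D1.
  pose proof (Rabs_sub3_le _ _ _ _ _ _ D1
    (Hsum j (j + 1)%Z ltac:(lia) ltac:(lia)) (Hsum (j - 1)%Z j ltac:(lia) ltac:(lia))) as D.
  match goal with |- Rabs ?a <= _ => match type of D with Rabs ?b <= _ =>
    replace a with b by ring end end.
  lra.
Qed.

Section fixed_point_reduction.
Variables (rho : Z -> R) (einv : R -> R).
Hypotheses
  (Hrho : forall j, (- N <= j <= - K)%Z -> L < rho j < rU /\ eta_hat (rho j) = Phi N f j)
  (Heinv : forall z, eta L < z < eta rU -> L < einv z < rU /\ eta (einv z) = z).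

Local Notation n := (Z.to_nat K).
Local Notation glue := (symmetric_glue K rho).
Local Notation T := (inner_map N K f rho einv).

Lemma glue_box x : inbox n L rU x -> in_box N L rU (glue x).
Proof.
  intros Hx j Hj. unfold symmetric_glue. destruct (Z.ltb_spec (Z.abs j) K).
  - apply Hx. lia.
  - pose proof (Hrho (- Z.abs j)%Z ltac:(lia)). lra.
Qed.

Lemma inner_map_range x i :
  inbox n L rU x -> (i < n)%nat ->
  L < T x i < rU /\ eta (T x i) = inner_rhs N K f (glue x) (Z.of_nat i).
Proof. intros Hx Hi. apply Heinv, inner_rhs_range; [apply glue_box, Hx | lia]. Qed.

Lemma inner_map_box x : inbox n L rU x -> inbox n L rU (T x).
Proof. intros Hx i Hi. pose proof (inner_map_range x i Hx Hi). lra. Qed.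

Lemma inner_map_lipschitz : box_lipschitz n L rU (6 * c / d) T.
Proof.
  intros x y delta Hx Hy Hxy i Hi. pose proof d_pos.
  assert (Hglue : forall m, (- N <= m <= N)%Z ->
    Rabs (glue x m - glue y m) <= delta).
  { intros m Hm. unfold symmetric_glue. destruct (Z.ltb_spec (Z.abs m) K).
    - apply Hxy. lia.
    - assert (0 <= delta) by (eapply Rle_trans; [apply Rabs_pos | apply (Hxy 0%nat); lia]).
      rewrite Rminus_diag, Rabs_R0. assumption. }
  assert (Houter : forall m, (K <= Z.abs m)%Z -> glue x m = glue y m).
  { intros m Hm. unfold symmetric_glue. destruct (Z.ltb_spec (Z.abs m) K); [lia | reflexivity]. }
  pose proof (inner_rhs_lipschitz _ _ _ (Z.of_nat i) (glue_box x Hx) (glue_box y Hy)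
    (Houter (- K)%Z ltac:(lia)) (Houter (- K - 1)%Z ltac:(lia)) Hglue ltac:(lia)) as Hrhs.
  destruct (inner_map_range x i Hx Hi) as [Hxi Hex].
  destruct (inner_map_range y i Hy Hi) as [Hyi Hey].
  pose proof (eta_expanding_box (T x i) (T y i) ltac:(lra) ltac:(lra)) as Hexp.
  rewrite Hex, Hey in Hexp.
  apply (Rmult_le_reg_l d); [assumption |].
  replace (d * (6 * c / d * delta)) with (6 * c * delta) by (field; lra). lra.
Qed.

Lemma equilibrium_of_fixed_point x :
  inbox n L rU x -> (forall i, (i < n)%nat -> T x i = x i) ->
  symmetric_vec N (glue x) /\ in_Omega N L rU (glue x) /\ equilibrium N K f (glue x).
Proof.
  intros Hx Hfix.
  assert (Hinner : forall j, (Z.abs j < K)%Z -> glue x j = T x (Z.to_nat (Z.abs j))).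
  { intros j Hj. unfold symmetric_glue. destruct (Z.ltb_spec (Z.abs j) K); [| lia].
    symmetry. apply Hfix. lia. }
  assert (Houter : forall j, (K <= Z.abs j)%Z -> glue x j = rho (- Z.abs j)%Z).
  { intros j Hj. unfold symmetric_glue. destruct (Z.ltb_spec (Z.abs j) K); [lia | reflexivity]. }
  split; [apply symmetric_glue_symmetric | split].
  - intros j Hj. destruct (Z_lt_le_dec (Z.abs j) K).
    + rewrite Hinner by lia. apply inner_map_range; [assumption | lia].
    + rewrite Houter by lia. apply Hrho. lia.
  - apply equilibrium_iff_stress; auto using symmetric_glue_symmetric. intros j Hj.
    destruct (Z_lt_le_dec (Z.abs j) K) as [Hin | Hout].
    + apply stress_inner_iff; [lia |].
      rewrite Hinner by lia. rewrite (proj2 (inner_map_range x (Z.to_nat (Z.abs j)) Hx ltac:(lia))).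
      destruct (Z_le_gt_dec 0 j).
      * replace (Z.of_nat (Z.to_nat (Z.abs j))) with j by lia. reflexivity.
      * replace (Z.of_nat (Z.to_nat (Z.abs j))) with (- j)%Z by lia.
        apply inner_rhs_opp; auto using symmetric_glue_symmetric. lia.
    + unfold qcf_stress. replace (orb (j <=? - K)%Z (K <=? j)%Z) with true
        by (destruct (Z.leb_spec j (- K)); destruct (Z.leb_spec K j); simpl; auto; lia).
      rewrite Houter, (proj2 (Hrho (- Z.abs j)%Z ltac:(lia))) by lia.
      destruct (Z_le_gt_dec 0 j).
      * rewrite Z.abs_eq by lia. apply Phi_opp; assumption.
      * rewrite Z.abs_neq, Z.opp_involutive by lia. reflexivity.
Qed.

Lemma fixed_point_of_equilibrium r :
  symmetric_vec N r -> in_Omega N L rU r -> equilibrium N K f r ->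
  inbox n L rU (fun k => r (Z.of_nat k)) /\
  (forall i, (i < n)%nat -> T (fun k => r (Z.of_nat k)) i = r (Z.of_nat i)) /\
  forall j, (- N <= j <= N)%Z -> r j = glue (fun k => r (Z.of_nat k)) j.
Proof.
  intros Hs Ho He. set (x := fun k => r (Z.of_nat k)).
  pose proof (proj1 (equilibrium_iff_stress N K f r HK HKN Hf Hs) He) as HS.
  assert (Hbox : in_box N L rU r) by (intros j Hj; pose proof (Ho j Hj); lra).
  assert (Hglue : forall j, (- N <= j <= N)%Z -> r j = glue x j).
  { intros j Hj. unfold symmetric_glue, x. destruct (Z.ltb_spec (Z.abs j) K).
    - rewrite Z2Nat.id by lia. destruct (Z_le_gt_dec 0 j).
      + f_equal. lia.
      + replace (Z.abs j) with (- j)%Z by lia. symmetry. apply (symmetric_vec_opp N); auto; lia.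
    - pose proof (HS (- Z.abs j)%Z ltac:(lia)) as Hj'. unfold qcf_stress in Hj'.
      destruct (Z.leb_spec (- Z.abs j) (- K)); [| lia]. simpl in Hj'.
      rewrite <- (proj2 (Hrho (- Z.abs j)%Z ltac:(lia))) in Hj'.
      apply eta_hat_inj_box in Hj';
        [| apply Hbox; lia | pose proof (Hrho (- Z.abs j)%Z ltac:(lia)); lra].
      rewrite <- Hj'. destruct (Z_le_gt_dec 0 j).
      + replace (Z.abs j) with j by lia. symmetry. apply (symmetric_vec_opp N); auto; lia.
      + f_equal. lia. }
  split; [| split; [| exact Hglue]].
  - intros k Hk. apply Hbox. lia.
  - intros i Hi. destruct (inner_map_range x i ltac:(intros k Hk; apply Hbox; lia) Hi) as [HT HeT].
    apply eta_inj_box; [lra | apply Hbox; lia |].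
    rewrite HeT, (inner_rhs_ext N K f (glue x) r (Z.of_nat i) HKN);
      [| intros m Hm; symmetry; auto | lia].
    symmetry. apply stress_inner_iff; [lia | apply HS; lia].
Qed.

End fixed_point_reduction.
End qcf_solution.

Theorem corollary4p7 (t2 a1 : R) (N K : Z) (f : Z -> R) (rU : R) :
  is_tilde_r2 t2 -> is_a1 a1 ->
  (0 < N)%Z -> (0 < K)%Z -> (K < N - 1)%Z ->
  (forall j, (0 <= j <= N)%Z -> f (j + 1)%Z = - f (- j)%Z) ->
  t2 / 2 < rU < a1 ->
  r_L t2 rU < rU ->
  (forall j, (-N <= j <= N)%Z ->
     eta (r_L t2 rU) + 4 * eta (2 * r_L t2 rU) - 2 * eta (2 * rU) < Phi N f j
     < eta rU + 4 * eta (2 * rU) - 2 * eta (2 * r_L t2 rU)) ->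
  exists r : Z -> R,
    (symmetric_vec N r /\ in_Omega N (r_L t2 rU) rU r /\ equilibrium N K f r) /\
    (forall r' : Z -> R,
       symmetric_vec N r' -> in_Omega N (r_L t2 rU) rU r' -> equilibrium N K f r' ->
       forall j, (-N <= j <= N)%Z -> r' j = r j).
Proof.
  intros Ht2 Ha1 _ HK HKN Hf HrU HLU HPhi.
  destruct (outer_solution t2 N K f rU) as [rho Hrho]; auto.
  destruct (eta_inverse t2 rU) as [einv Heinv]; auto.
  destruct (contraction_factor t2 a1 rU) as [Hq0 Hq1]; auto.
  destruct (BoxContraction.box_unique_fixpoint (Z.to_nat K) (r_L t2 rU) rU
    (6 * eta_lip (2 * r_L t2 rU) / eta1 rU) (inner_map N K f rho einv))
    as [x [Hx [Hfix Huniq]]]; auto using Rlt_le.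
  - apply inner_map_box; auto.
  - apply (inner_map_lipschitz t2 a1); auto.
  - exists (symmetric_glue K rho x). split.
    + apply (equilibrium_of_fixed_point t2 N K f rU Ht2 HK HKN Hf HPhi rho einv); auto.
    + intros r' Hs Ho He j Hj.
      destruct (fixed_point_of_equilibrium t2 a1 N K f rU)
        with (rho := rho) (einv := einv) (r := r') as [Hx' [Hfix' Hr']]; auto.
      rewrite Hr' by exact Hj. apply symmetric_glue_ext.
      intros k Hk. apply (Huniq (fun k => r' (Z.of_nat k))); auto.
Qed.
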